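(* (1) $U_{K,L,twist}$, with the bialgebra structure of the context and the antihomomorphism $\mathsf{S}$ given by $\mathsf{S}(K)=\overline{K}$, $\mathsf{S}(\overline{K})=K$, $\mathsf{S}(L)=\overline{L}$, $\mathsf{S}(\overline{L})=L$, $\mathsf{S}(E)=-E(\overline{K}+\overline{L})$, $\mathsf{S}(F)=-(K+L)F$, is a Hopf algebra with antipode $\mathsf{S}$, i.e. $\mathsf{S}\star\mathsf{id}=\mathsf{id}\star\mathsf{S}=\eta\circ\varepsilon$. (2) $U_{K,L,norm}$, with the bialgebra structure of the context and the antihomomorphism $\mathsf{T}$ given by the same formulas ($\mathsf{T}(K)=\overline{K}$, $\mathsf{T}(\overline{K})=K$, $\mathsf{T}(L)=\overline{L}$, $\mathsf{T}(\overline{L})=L$, $\mathsf{T}(E)=-E(\overline{K}+\overline{L})$, $\mathsf{T}(F)=-(K+L)F$), is a von Neumann–Hopf algebra, i.e. $\mathsf{id}\star\mathsf{T}\star\mathsf{id}=\mathsf{id}$ and $\mathsf{T}\star\mathsf{id}\star\mathsf{T}=\mathsf{T}$.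
   Context: Fix $q\in\mathbb{C}$, $q\neq 0,\pm1$. Both $U_{K,L,norm}$ and $U_{K,L,twist}$ are unital associative $\mathbb{C}$-algebras generated by $K,\overline{K},L,\overline{L},E,F$ subject to the common relations $K\overline{K}K=K$, $\overline{K}K\overline{K}=\overline{K}$, $K\overline{K}=\overline{K}K$, $L\overline{L}L=L$, $\overline{L}L\overline{L}=\overline{L}$, $L\overline{L}=\overline{L}L$, $K\overline{K}+L\overline{L}=\mathbf{1}$, $EF-FE=\frac{(K+L)-(\overline{K}+\overline{L})}{q-q^{-1}}$, together with: for $U_{K,L,norm}$: $KE=q^2EK$, $LE=q^2EL$, $\overline{K}E=q^{-2}E\overline{K}$, $\overline{L}E=q^{-2}E\overline{L}$, $KF=q^{-2}FK$, $LF=q^{-2}FL$, $\overline{K}F=q^2F\overline{K}$, $\overline{L}F=q^2F\overline{L}$; for $U_{K,L,twist}$: $KE=q^2EL$, $LE=q^2EK$, $\overline{K}E=q^{-2}E\overline{L}$, $\overline{L}E=q^{-2}E\overline{K}$, $KF=q^{-2}FL$, $LF=q^{-2}FK$, $\overline{K}F=q^2F\overline{L}$, $\overline{L}F=q^2F\overline{K}$. Bialgebra structures: in both algebras $\Delta(E)=\mathbf{1}\otimes E+E\otimes(K+L)$, $\Delta(F)=F\otimes\mathbf{1}+(\overline{K}+\overline{L})\otimes F$, $\varepsilon(K)=\varepsilon(\overline{K})=1$, $\varepsilon(L)=\varepsilon(\overline{L})=\varepsilon(E)=\varepsilon(F)=0$; in $U_{K,L,norm}$: $\Delta(K)=K\otimes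 K$, $\Delta(\overline{K})=\overline{K}\otimes\overline{K}$, $\Delta(L)=L\otimes L+L\otimes K+K\otimes L$, $\Delta(\overline{L})=\overline{L}\otimes\overline{L}+\overline{L}\otimes\overline{K}+\overline{K}\otimes\overline{L}$; in $U_{K,L,twist}$: $\Delta(K)=K\otimes K+L\otimes L$, $\Delta(\overline{K})=\overline{K}\otimes\overline{K}+\overline{L}\otimes\overline{L}$, $\Delta(L)=L\otimes K+K\otimes L$, $\Delta(\overline{L})=\overline{L}\otimes\overline{K}+\overline{K}\otimes\overline{L}$ (each extended to algebra homomorphisms). Convolution: $A\star B=\mu\circ(A\otimes B)\circ\Delta$; $\eta(\lambda)=\lambda\mathbf{1}$. *)

From HB Require Import structures.
From mathcomp Require Import all_boot all_order all_algebra.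
Set Implicit Arguments. Unset Strict Implicit. Unset Printing Implicit Defensive.
Import Order.TTheory GRing.Theory Num.Theory.
Local Open Scope ring_scope.

Inductive gen := GK | GKb | GL | GLb | GE | GF.

Definition gen_eqb (a b : gen) : bool :=
  match a, b with
  | GK, GK | GKb, GKb | GL, GL | GLb, GLb | GE, GE | GF, GF => true
  | _, _ => false end.

Lemma gen_eqP : Equality.axiom gen_eqb.
Proof. by case; case; constructor. Qed.

HB.instance Definition _ := hasDecEq.Build gen gen_eqP.

Section FreeAlg.
Variable R : fieldType.

(* Elements of the free algebra R<K,Kb,L,Lb,E,F> as formal linear
   combinations of words (not normalised; compared through [coeff]). *)
Definition word := seq gen.
Definition Free := seq (R * word).
(* Elements of Free (x) Free: formal linear combinations of pairs of words. *)
Definition Tens := seq (R * (word * word)).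

Definition coeff (x : Free) (w : word) : R :=
  \sum_(p <- x) (if p.2 == w then p.1 else 0).

Definition fone : Free := [:: (1, [::])].
Definition fword (w : word) : Free := [:: (1, w)].
Definition fscale (a : R) (x : Free) : Free := [seq (a * p.1, p.2) | p <- x].
Definition fsub (x y : Free) : Free := x ++ fscale (-1) y.
Definition fmul (x y : Free) : Free :=
  [seq (p.1 * p'.1, p.2 ++ p'.2) | p <- x, p' <- y].
Definition lin (h : word -> Free) (x : Free) : Free :=
  flatten [seq fscale p.1 (h p.2) | p <- x].

Definition tmul (x y : Tens) : Tens :=
  [seq (p.1 * p'.1, (p.2.1 ++ p'.2.1, p.2.2 ++ p'.2.2)) | p <- x, p' <- y].

(* The comultiplication, extended multiplicatively from generators
   (an algebra homomorphism Free -> Free (x) Free). *)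
Definition delta_word (dg : gen -> Tens) (w : word) : Tens :=
  foldr (fun g acc => tmul (dg g) acc) [:: (1, ([::], [::]))] w.

Definition pt (a : R) (u v : word) : R * (word * word) := (a, (u, v)).

Definition delta_norm_gen (g : gen) : Tens :=
  match g with
  | GK => [:: pt 1 [:: GK] [:: GK]]
  | GKb => [:: pt 1 [:: GKb] [:: GKb]]
  | GL => [:: pt 1 [:: GL] [:: GL]; pt 1 [:: GL] [:: GK]; pt 1 [:: GK] [:: GL]]
  | GLb => [:: pt 1 [:: GLb] [:: GLb]; pt 1 [:: GLb] [:: GKb];
              pt 1 [:: GKb] [:: GLb]]
  | GE => [:: pt 1 [::] [:: GE]; pt 1 [:: GE] [:: GK]; pt 1 [:: GE] [:: GL]]
  | GF => [:: pt 1 [:: GF] [::]; pt 1 [:: GKb] [:: GF]; pt 1 [:: GLb] [:: GF]]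
  end.

Definition delta_twist_gen (g : gen) : Tens :=
  match g with
  | GK => [:: pt 1 [:: GK] [:: GK]; pt 1 [:: GL] [:: GL]]
  | GKb => [:: pt 1 [:: GKb] [:: GKb]; pt 1 [:: GLb] [:: GLb]]
  | GL => [:: pt 1 [:: GL] [:: GK]; pt 1 [:: GK] [:: GL]]
  | GLb => [:: pt 1 [:: GLb] [:: GKb]; pt 1 [:: GKb] [:: GLb]]
  | GE => [:: pt 1 [::] [:: GE]; pt 1 [:: GE] [:: GK]; pt 1 [:: GE] [:: GL]]
  | GF => [:: pt 1 [:: GF] [::]; pt 1 [:: GKb] [:: GF]; pt 1 [:: GLb] [:: GF]]
  end.

Definition eps_gen (g : gen) : R :=
  match g with GK | GKb => 1 | _ => 0 end.
Definition eps_word (w : word) : R := \prod_(g <- w) eps_gen g.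
Definition eps (x : Free) : R := \sum_(p <- x) p.1 * eps_word p.2.
Definition etaeps (x : Free) : Free := [:: (eps x, [::])].

Definition S_gen (g : gen) : Free :=
  match g with
  | GK => fword [:: GKb]
  | GKb => fword [:: GK]
  | GL => fword [:: GLb]
  | GLb => fword [:: GL]
  | GE => [:: (-1, [:: GE; GKb]); (-1, [:: GE; GLb])]
  | GF => [:: (-1, [:: GK; GF]); (-1, [:: GL; GF])]
  end.
(* antihomomorphic extension: S(g1 ... gn) = S(gn) ... S(g1) *)
Definition S_word (w : word) : Free :=
  foldr (fun g acc => fmul acc (S_gen g)) fone w.
Definition Smap (x : Free) : Free := lin S_word x.

(* convolution  f * g = mu o (f (x) g) o Delta, for f g given on words
   and extended linearly *)
Definition conv (dg : gen -> Tens) (f g : word -> Free) (x : Free) : Free :=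
  lin (fun w => flatten [seq fscale p.1 (fmul (f p.2.1) (g p.2.2))
                        | p <- delta_word dg w]) x.

(* triple convolution (f * g) * h = mu o (mu o (f (x) g) (x) h) o (Delta (x) id) o Delta *)
Definition conv3 (dg : gen -> Tens) (f g h : word -> Free) (x : Free) : Free :=
  lin (fun w => flatten [seq flatten
          [seq fscale (p.1 * p'.1) (fmul (fmul (f p'.2.1) (g p'.2.2)) (h p.2.2))
          | p' <- delta_word dg p.2.1]
        | p <- delta_word dg w]) x.

Definition idw (w : word) : Free := fword w.

Definition in_ideal (rels : seq Free) (x : Free) : Prop :=
  exists s : seq (R * word * Free * word),
    all (fun t => t.1.2 \in rels) s /\
    forall w, coeff x w =
      coeff (flatten [seq fscale t.1.1.1
                       (fmul (fmul (fword t.1.1.2) t.1.2) (fword t.2)) | t <- s]) w.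

(* Relators (r means r = 0). *)
Definition rels_common (q : R) : seq Free :=
  let c := (q - q^-1)^-1 in
  [:: [:: (1, [:: GK; GKb; GK]); (-1, [:: GK])];
      [:: (1, [:: GKb; GK; GKb]); (-1, [:: GKb])];
      [:: (1, [:: GK; GKb]); (-1, [:: GKb; GK])];
      [:: (1, [:: GL; GLb; GL]); (-1, [:: GL])];
      [:: (1, [:: GLb; GL; GLb]); (-1, [:: GLb])];
      [:: (1, [:: GL; GLb]); (-1, [:: GLb; GL])];
      [:: (1, [:: GK; GKb]); (1, [:: GL; GLb]); (-1, [::])];
      [:: (1, [:: GE; GF]); (-1, [:: GF; GE]); (- c, [:: GK]); (- c, [:: GL]);
          (c, [:: GKb]); (c, [:: GLb])]].

Definition rel2 (a : gen) (b : gen) (s : R) (c d : gen) : Free :=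
  [:: (1, [:: a; b]); (- s, [:: c; d])].

Definition rels_norm (q : R) : seq Free :=
  rels_common q ++
  [:: rel2 GK GE (q ^+ 2) GE GK; rel2 GL GE (q ^+ 2) GE GL;
      rel2 GKb GE (q ^- 2) GE GKb; rel2 GLb GE (q ^- 2) GE GLb;
      rel2 GK GF (q ^- 2) GF GK; rel2 GL GF (q ^- 2) GF GL;
      rel2 GKb GF (q ^+ 2) GF GKb; rel2 GLb GF (q ^+ 2) GF GLb].

Definition rels_twist (q : R) : seq Free :=
  rels_common q ++
  [:: rel2 GK GE (q ^+ 2) GE GL; rel2 GL GE (q ^+ 2) GE GK;
      rel2 GKb GE (q ^- 2) GE GLb; rel2 GLb GE (q ^- 2) GE GKb;
      rel2 GK GF (q ^- 2) GF GL; rel2 GL GF (q ^- 2) GF GK;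
      rel2 GKb GF (q ^+ 2) GF GLb; rel2 GLb GF (q ^+ 2) GF GKb].

End FreeAlg.

From HB Require Import structures.
From mathcomp Require Import all_boot all_order all_algebra.
From Stdlib Require Import ClassicalEpsilon FunctionalExtensionality.
From Stdlib Require Import PropExtensionality ProofIrrelevance.
Set Implicit Arguments. Unset Strict Implicit. Unset Printing Implicit Defensive.
Import GRing.Theory.
Local Open Scope ring_scope.

(* We argue inside the quotient ring.
   - [in_ideal rels] is a two-sided ideal, so the classes modulo it form a
     ring [Q rels] whose projection [cls] has exactly the ideal as kernel; S
     induces an antihomomorphism [Free R -> Q rels], which preserves the
     ideal as soon as it kills every relator ([Smap_ideal]).
   - Since Delta is multiplicative on words, the convolutions [id * S] and
     [S * id] evaluated on a word factor over its letters once their values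
     on generators are central.  This reduces the antipode identities and
     the von Neumann identities [id * T * id = id], [T * id * T = T] to
     checks on the six generators.
   - The common relations make [k kb], [l lb] complementary orthogonal
     idempotents and [K + L], [Kb + Lb] mutually inverse (in any ring).  From
     this, S kills every relator, and the generator checks are short
     computations: the values of [id * S], [S * id] on generators are the
     counit in the twisted algebra, and the central idempotents [k kb] or
     [l lb] in the normal one. *)

Section FreeAlgebra.
Variable R : fieldType.
Implicit Types (x y z : Free R) (u v w : word).

Definition eqc x y := forall w, coeff x w = coeff y w.

Lemma coeff_nil w : coeff ([::] : Free R) w = 0.
Proof. by rewrite /coeff big_nil. Qed.

Lemma coeff_cons p x w :
  coeff (p :: x) w = (if p.2 == w then p.1 else 0) + coeff x w.
Proof. by rewrite /coeff big_cons. Qed.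

Lemma coeff_cat x y w : coeff (x ++ y) w = coeff x w + coeff y w.
Proof. by rewrite /coeff big_cat. Qed.

Lemma coeff_scale a x w : coeff (fscale a x) w = a * coeff x w.
Proof.
rewrite /coeff /fscale big_map mulr_sumr; apply: eq_bigr => p _ /=.
by case: eqP; rewrite ?mulr0.
Qed.

Lemma coeff_fmul x y w : coeff (fmul x y) w =
  \sum_(p <- x) \sum_(p' <- y) (if p.2 ++ p'.2 == w then p.1 * p'.1 else 0).
Proof. by rewrite /coeff /fmul big_allpairs_dep. Qed.

Lemma coeff_fword u w : coeff (fword R u) w = if u == w then 1 else 0.
Proof. by rewrite /coeff big_cons big_nil addr0. Qed.

Lemma coeff_flatten (l : seq (Free R)) w :
  coeff (flatten l) w = \sum_(z <- l) coeff z w.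
Proof.
by elim: l => [|z l IH] /=; rewrite ?big_nil ?coeff_nil // coeff_cat IH big_cons.
Qed.

(* A sum over the terms of [x] of an expression additive in the coefficient
   only depends on the coefficients of [x]: group the terms by word. *)
Lemma sum_by_coeff (V : nmodType) (phi : R -> word -> V)
    (phi0 : forall u, phi 0 u = 0)
    (phiD : forall a b u, phi (a + b) u = phi a u + phi b u)
    (s : seq word) x :
  uniq s -> {subset [seq p.2 | p <- x] <= s} ->
  \sum_(p <- x) phi p.1 p.2 = \sum_(u <- s) phi (coeff x u) u.
Proof.
move=> us; elim: x => [|p x IH] sub.
  by rewrite big_nil big1 // => u _; rewrite coeff_nil phi0.
rewrite big_cons IH; last by move=> u hu; apply: sub; rewrite inE hu orbT.
have ps : p.2 \in s by apply: sub; rewrite inE eqxx.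
have -> : \sum_(u <- s) phi (coeff (p :: x) u) u =
    \sum_(u <- s) (phi (if p.2 == u then p.1 else 0) u + phi (coeff x u) u).
  by apply: eq_bigr => u _; rewrite coeff_cons phiD.
rewrite big_split /=; congr (_ + _).
rewrite (bigD1_seq p.2) //= eqxx big1 ?addr0 // => u hu.
by rewrite eq_sym (negbTE hu) phi0.
Qed.

Lemma sum_eqc (V : nmodType) (phi : R -> word -> V)
    (phi0 : forall u, phi 0 u = 0)
    (phiD : forall a b u, phi (a + b) u = phi a u + phi b u) x y :
  eqc x y -> \sum_(p <- x) phi p.1 p.2 = \sum_(p <- y) phi p.1 p.2.
Proof.
move=> e; set s := undup [seq p.2 | p <- x ++ y].
have us : uniq s by apply: undup_uniq.
rewrite !(sum_by_coeff phi0 phiD us).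
- by apply: eq_bigr => u _; rewrite e.
- by move=> u hu; rewrite mem_undup map_cat mem_cat hu orbT.
- by move=> u hu; rewrite mem_undup map_cat mem_cat hu.
Qed.

Lemma eqc_sym x y : eqc x y -> eqc y x.
Proof. by move=> h w; rewrite h. Qed.

Lemma eqc_trans x y z : eqc x y -> eqc y z -> eqc x z.
Proof. by move=> h1 h2 w; rewrite h1 h2. Qed.

Lemma eqc_scale a x x' : eqc x x' -> eqc (fscale a x) (fscale a x').
Proof. by move=> h w; rewrite !coeff_scale h. Qed.

Lemma eqc_cat x x' y y' : eqc x x' -> eqc y y' -> eqc (x ++ y) (x' ++ y').
Proof. by move=> h1 h2 w; rewrite !coeff_cat h1 h2. Qed.

Lemma eqc_flatten (T : Type) (f g : T -> Free R) (l : seq T) :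
  (forall t, eqc (f t) (g t)) -> eqc (flatten (map f l)) (flatten (map g l)).
Proof. by move=> h w; rewrite !coeff_flatten !big_map; apply: eq_bigr => t _; apply: h. Qed.

Lemma eqc_catC x y : eqc (x ++ y) (y ++ x).
Proof. by move=> w; rewrite !coeff_cat addrC. Qed.

Lemma eqc_fmull x x' y : eqc x x' -> eqc (fmul x y) (fmul x' y).
Proof.
move=> h w; rewrite !coeff_fmul; apply: (sum_eqc
  (phi := fun a u => \sum_(p' <- y) (if u ++ p'.2 == w then a * p'.1 else 0))) h.
- by move=> u; apply: big1 => p' _; case: ifP; rewrite ?mul0r.
- move=> a b u; rewrite -big_split; apply: eq_bigr => p' _ /=.
  by case: ifP; rewrite ?mulrDl ?addr0.
Qed.

Lemma eqc_fmulr x y y' : eqc y y' -> eqc (fmul x y) (fmul x y').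
Proof.
move=> h w; rewrite !coeff_fmul exchange_big [RHS]exchange_big; apply: (sum_eqc
  (phi := fun b v => \sum_(p <- x) (if p.2 ++ v == w then p.1 * b else 0))) h.
- by move=> u; apply: big1 => p _; case: ifP; rewrite ?mulr0.
- move=> a b u; rewrite -big_split; apply: eq_bigr => p _ /=.
  by case: ifP; rewrite ?mulrDr ?addr0.
Qed.

Lemma fmul_catl x x' y : fmul (x ++ x') y = fmul x y ++ fmul x' y.
Proof. by rewrite /fmul allpairs_cat. Qed.

Lemma eqc_fmul_catr x y y' : eqc (fmul x (y ++ y')) (fmul x y ++ fmul x y').
Proof.
move=> w; rewrite coeff_cat !coeff_fmul -big_split; apply: eq_bigr => p _.
by rewrite big_cat.
Qed.

Lemma eqc_fmul0r x : eqc (fmul x [::]) [::].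
Proof. by move=> w; rewrite coeff_fmul coeff_nil big1 // => p _; rewrite big_nil. Qed.

Lemma fmul_flattenl (l : seq (Free R)) y :
  fmul (flatten l) y = flatten [seq fmul z y | z <- l].
Proof. by elim: l => [|z l IH] //=; rewrite fmul_catl IH. Qed.

Lemma eqc_fmul_flattenr x (l : seq (Free R)) :
  eqc (fmul x (flatten l)) (flatten [seq fmul x z | z <- l]).
Proof.
elim: l => [|z l IH] /=; first exact: eqc_fmul0r.
exact: eqc_trans (eqc_fmul_catr _ _ _) (eqc_cat (fun w => erefl) IH).
Qed.

Lemma eqc_fmul_scalel a x y : eqc (fmul (fscale a x) y) (fscale a (fmul x y)).
Proof.
move=> w; rewrite coeff_scale !coeff_fmul /fscale big_map mulr_sumr.
apply: eq_bigr => p _; rewrite mulr_sumr; apply: eq_bigr => p' _ /=.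
by case: ifP; rewrite ?mulr0 // mulrA.
Qed.

Lemma eqc_fmul_scaler a x y : eqc (fmul x (fscale a y)) (fscale a (fmul x y)).
Proof.
move=> w; rewrite coeff_scale !coeff_fmul /fscale mulr_sumr.
apply: eq_bigr => p _; rewrite big_map mulr_sumr; apply: eq_bigr => p' _ /=.
by case: ifP; rewrite ?mulr0 // mulrCA.
Qed.

Lemma eqc_fmulA x y z : eqc (fmul x (fmul y z)) (fmul (fmul x y) z).
Proof.
move=> w; rewrite !coeff_fmul /fmul big_allpairs_dep; apply: eq_bigr => p _.
rewrite big_allpairs_dep; apply: eq_bigr => p' _; apply: eq_bigr => p'' _ /=.
by rewrite catA mulrA.
Qed.

Lemma eqc_fmul1l x : eqc (fmul (fone R) x) x.
Proof.
move=> w; rewrite coeff_fmul big_cons big_nil addr0 /=; apply: eq_bigr => p _.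
by rewrite mul1r.
Qed.

Lemma eqc_fmul1r x : eqc (fmul x (fone R)) x.
Proof.
move=> w; rewrite coeff_fmul; apply: eq_bigr => p _.
by rewrite big_cons big_nil addr0 /= cats0 mulr1.
Qed.

Lemma eqc_fword_cat u v : eqc (fword R (u ++ v)) (fmul (fword R u) (fword R v)).
Proof.
by move=> w; rewrite coeff_fmul coeff_fword !big_cons !big_nil !addr0 /= mulr1.
Qed.

Lemma eqc_term (p : R * word) : eqc [:: p] (fscale p.1 (fword R p.2)).
Proof.
move=> w; rewrite coeff_scale coeff_fword coeff_cons coeff_nil addr0.
by case: ifP; rewrite ?mulr1 ?mulr0.
Qed.

End FreeAlgebra.

Section Ideal.
Variables (R : fieldType) (rels : seq (Free R)).
Implicit Types (x y z : Free R) (u v w : word).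

Local Notation I := (in_ideal rels).

Definition ideal_comb (s : seq (R * word * Free R * word)) : Free R :=
  flatten [seq fscale t.1.1.1 (fmul (fmul (fword R t.1.1.2) t.1.2) (fword R t.2))
          | t <- s].

Lemma in_idealP x :
  I x <-> exists2 s, all (fun t => t.1.2 \in rels) s & eqc x (ideal_comb s).
Proof. by split=> [[s [hs e]]|[s hs e]]; exists s. Qed.

Lemma ideal_eqc x y : eqc x y -> I y -> I x.
Proof. by move=> e [s [h1 h2]]; exists s; split => // w; rewrite e h2. Qed.

Lemma ideal_nil : I [::].
Proof. by exists [::]. Qed.

Lemma ideal_cat x y : I x -> I y -> I (x ++ y).
Proof.
move=> [s1 [a1 e1]] [s2 [a2 e2]]; exists (s1 ++ s2); split; first by rewrite all_cat a1.
by move=> w; rewrite coeff_cat e1 e2 map_cat flatten_cat coeff_cat.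
Qed.

Lemma ideal_scale a x : I x -> I (fscale a x).
Proof.
move=> [s [a1 e1]]; exists [seq ((a * t.1.1.1, t.1.1.2, t.1.2), t.2) | t <- s].
split; first by rewrite all_map.
move=> w; rewrite coeff_scale e1 -map_comp !coeff_flatten !big_map mulr_sumr.
by apply: eq_bigr => t _ /=; rewrite !coeff_scale mulrA.
Qed.

Lemma ideal_rel r : r \in rels -> I r.
Proof.
move=> hr; exists [:: ((1, [::], r), [::])]; split; first by rewrite /= hr.
move=> w; rewrite /= cats0 coeff_scale mul1r; move: w.
apply: eqc_trans (eqc_sym (eqc_fmul1r _)) _.
exact/eqc_fmull/eqc_sym/eqc_fmul1l.
Qed.

Lemma ideal_lmul_word u x : I x -> I (fmul (fword R u) x).
Proof.
case/in_idealP=> s hs e; apply/in_idealP.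
exists [seq ((t.1.1.1, u ++ t.1.1.2, t.1.2), t.2) | t <- s]; first by rewrite all_map.
apply: eqc_trans (eqc_fmulr _ e) _; apply: eqc_trans (eqc_fmul_flattenr _ _) _.
rewrite /ideal_comb -!map_comp; apply: eqc_flatten => t /=.
apply: eqc_trans (eqc_fmul_scaler _ _ _) _; apply: eqc_scale.
do 2 (apply: eqc_trans (eqc_fmulA _ _ _) _; apply: eqc_fmull).
exact/eqc_sym/eqc_fword_cat.
Qed.

Lemma ideal_rmul_word u x : I x -> I (fmul x (fword R u)).
Proof.
case/in_idealP=> s hs e; apply/in_idealP.
exists [seq ((t.1.1.1, t.1.1.2, t.1.2), t.2 ++ u) | t <- s]; first by rewrite all_map.
apply: eqc_trans (eqc_fmull _ e) _.
rewrite /ideal_comb fmul_flattenl -!map_comp; apply: eqc_flatten => t /=.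
apply: eqc_trans (eqc_fmul_scalel _ _ _) _; apply: eqc_scale.
apply: eqc_trans (eqc_sym (eqc_fmulA _ _ _)) _; apply: eqc_fmulr.
exact/eqc_sym/eqc_fword_cat.
Qed.

Lemma ideal_lmul z x : I x -> I (fmul z x).
Proof.
move=> hx; elim: z => [|p z IH]; first exact: ideal_nil.
rewrite -cat1s fmul_catl; apply: ideal_cat => //.
apply: ideal_eqc (ideal_scale p.1 (ideal_lmul_word p.2 hx)).
exact: eqc_trans (eqc_fmull _ (eqc_term p)) (eqc_fmul_scalel _ _ _).
Qed.

Lemma ideal_rmul z x : I x -> I (fmul x z).
Proof.
move=> hx; elim: z => [|p z IH]; first exact: ideal_eqc (eqc_fmul0r _) ideal_nil.
apply: ideal_eqc (eqc_fmul_catr x [:: p] z) _; apply: ideal_cat => //.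
apply: ideal_eqc (ideal_scale p.1 (ideal_rmul_word p.2 hx)).
exact: eqc_trans (eqc_fmulr _ (eqc_term p)) (eqc_fmul_scaler _ _ _).
Qed.

Definition eqv x y := I (fsub x y).

Lemma coeff_fsub x y w : coeff (fsub x y) w = coeff x w - coeff y w.
Proof. by rewrite coeff_cat coeff_scale mulN1r. Qed.

Lemma ideal_lincomb x y z a :
  I x -> I y -> (forall w, coeff z w = coeff x w + a * coeff y w) -> I z.
Proof.
move=> hx hy e; apply: ideal_eqc (ideal_cat hx (ideal_scale a hy)) => w.
by rewrite e coeff_cat coeff_scale.
Qed.

Lemma eqc_eqv x y : eqc x y -> eqv x y.
Proof. by move=> e; apply: ideal_eqc ideal_nil => w; rewrite coeff_fsub e coeff_nil subrr. Qed.

Lemma eqv_refl x : eqv x x.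
Proof. exact: eqc_eqv. Qed.

Lemma eqv_sym x y : eqv x y -> eqv y x.
Proof.
move=> h; apply: (ideal_lincomb (a := -1) ideal_nil h) => w.
by rewrite !coeff_fsub coeff_nil add0r mulN1r opprB.
Qed.

Lemma eqv_trans x y z : eqv x y -> eqv y z -> eqv x z.
Proof.
move=> h1 h2; apply: (ideal_lincomb (a := 1) h1 h2) => w.
by rewrite !coeff_fsub mul1r addrA subrK.
Qed.

Lemma eqv_cat x x' y y' : eqv x x' -> eqv y y' -> eqv (x ++ y) (x' ++ y').
Proof.
move=> h1 h2; apply: (ideal_lincomb (a := 1) h1 h2) => w.
by rewrite !coeff_fsub !coeff_cat mul1r opprD addrACA.
Qed.

Lemma eqv_scale a x x' : eqv x x' -> eqv (fscale a x) (fscale a x').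
Proof.
move=> h; apply: (ideal_lincomb (a := a) ideal_nil h) => w.
by rewrite !coeff_fsub !coeff_scale coeff_nil add0r mulrBr.
Qed.

Lemma eqv_fmul x x' y y' : eqv x x' -> eqv y y' -> eqv (fmul x y) (fmul x' y').
Proof.
move=> h1 h2; apply: (ideal_lincomb (a := 1) (ideal_rmul y h1) (ideal_lmul x' h2)) => w.
rewrite !coeff_fsub /fsub fmul_catl coeff_cat mul1r.
rewrite (eqc_fmul_catr x' y) coeff_cat (eqc_fmul_scalel (-1) x' y).
rewrite (eqc_fmul_scaler (-1) x' y') !coeff_scale !mulN1r.
by rewrite addrA subrK.
Qed.

End Ideal.

(* The quotient algebra [Free R / (rels)], constructed classically as the
   type of congruence classes; [cls] is the projection, a ring morphism whose
   kernel is exactly the ideal (lemma [cls0_ideal]). *)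
Section Quotient.
Variables (R : fieldType) (rels : seq (Free R)).
Implicit Types (x y z : Free R).

Definition Q := {P : Free R -> Prop | exists x, P = eqv rels x}.
Definition cls x : Q := exist _ (eqv rels x) (ex_intro _ x erefl).

Lemma cls_eqv x y : cls x = cls y <-> eqv rels x y.
Proof.
split=> [e|h].
  have exy : eqv rels x = eqv rels y by move: (f_equal (@proj1_sig _ _) e).
  by apply: eqv_sym; rewrite -exy; apply: eqv_refl.
apply: eq_sig_hprop => [P p1 p2|]; first exact: proof_irrelevance.
apply: functional_extensionality => z; apply: propositional_extensionality.
by split=> hz; [apply: eqv_trans (eqv_sym h) hz | apply: eqv_trans h hz].
Qed.

Lemma cls_eqc x y : eqc x y -> cls x = cls y.
Proof. by move=> e; apply/cls_eqv/eqc_eqv. Qed.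

Definition rep (P : Q) : Free R :=
  proj1_sig (constructive_indefinite_description _ (proj2_sig P)).

Lemma repK P : cls (rep P) = P.
Proof.
rewrite /rep; case: constructive_indefinite_description => x /= e.
apply: eq_sig_hprop => [P' p1 p2|]; first exact: proof_irrelevance.
by rewrite /= e.
Qed.

Lemma Qind (Pr : Q -> Prop) : (forall x, Pr (cls x)) -> forall P, Pr P.
Proof. by move=> h P; rewrite -(repK P). Qed.

Lemma rep_cls x : eqv rels (rep (cls x)) x.
Proof. by apply/cls_eqv; rewrite repK. Qed.

Definition Q_eqb (P P' : Q) : bool :=
  if excluded_middle_informative (P = P') then true else false.

Lemma Q_eqP : Equality.axiom Q_eqb.
Proof. by move=> P P'; rewrite /Q_eqb; case: excluded_middle_informative; constructor. Qed.

HB.instance Definition _ := hasDecEq.Build Q Q_eqP.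

Definition Q_find (P : pred Q) (n : nat) : option Q :=
  match excluded_middle_informative (exists q : Q, P q) with
  | left h => Some (proj1_sig (constructive_indefinite_description _ h))
  | right _ => None end.

Lemma Q_find_correct P n (q : Q) : Q_find P n = Some q -> P q.
Proof.
rewrite /Q_find; case: excluded_middle_informative => // h [<-].
by case: constructive_indefinite_description.
Qed.

Lemma Q_find_complete (P : pred Q) : (exists q : Q, P q) -> exists n, Q_find P n.
Proof. by move=> h; exists 0%N; rewrite /Q_find; case: excluded_middle_informative. Qed.

Lemma Q_find_ext (P P' : pred Q) : P =1 P' -> Q_find P =1 Q_find P'.
Proof. by move=> h; have -> : P = P' by apply: functional_extensionality. Qed.

HB.instance Definition _ :=
  hasChoice.Build Q Q_find_correct Q_find_complete Q_find_ext.

Definition Q_zero : Q := cls [::].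
Definition Q_one : Q := cls (fone R).
Definition Q_add (P P' : Q) : Q := cls (rep P ++ rep P').
Definition Q_opp (P : Q) : Q := cls (fscale (-1) (rep P)).
Definition Q_mul (P P' : Q) : Q := cls (fmul (rep P) (rep P')).

Lemma Q_add_cls x y : Q_add (cls x) (cls y) = cls (x ++ y).
Proof. by apply/cls_eqv; apply: eqv_cat; apply: rep_cls. Qed.

Lemma Q_opp_cls x : Q_opp (cls x) = cls (fscale (-1) x).
Proof. by apply/cls_eqv; apply: eqv_scale; apply: rep_cls. Qed.

Lemma Q_mul_cls x y : Q_mul (cls x) (cls y) = cls (fmul x y).
Proof. by apply/cls_eqv; apply: eqv_fmul; apply: rep_cls. Qed.

Lemma Q_addA : associative Q_add.
Proof. by elim/Qind=> x; elim/Qind=> y; elim/Qind=> z; rewrite !Q_add_cls catA. Qed.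

Lemma Q_addC : commutative Q_add.
Proof. by elim/Qind=> x; elim/Qind=> y; rewrite !Q_add_cls; apply/cls_eqc/eqc_catC. Qed.

Lemma Q_add0 : left_id Q_zero Q_add.
Proof. by elim/Qind=> x; rewrite /Q_zero Q_add_cls. Qed.

Lemma Q_addN : left_inverse Q_zero Q_opp Q_add.
Proof.
elim/Qind=> x; rewrite Q_opp_cls Q_add_cls; apply: cls_eqc => w.
by rewrite coeff_cat coeff_scale coeff_nil mulN1r addNr.
Qed.

Lemma Q_mulA : associative Q_mul.
Proof.
by elim/Qind=> x; elim/Qind=> y; elim/Qind=> z; rewrite !Q_mul_cls; apply/cls_eqc/eqc_fmulA.
Qed.

Lemma Q_mul1 : left_id Q_one Q_mul.
Proof. by elim/Qind=> x; rewrite Q_mul_cls; apply/cls_eqc/eqc_fmul1l. Qed.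

Lemma Q_mulr1 : right_id Q_one Q_mul.
Proof. by elim/Qind=> x; rewrite Q_mul_cls; apply/cls_eqc/eqc_fmul1r. Qed.

Lemma Q_mulDl : left_distributive Q_mul Q_add.
Proof.
by elim/Qind=> x; elim/Qind=> y; elim/Qind=> z; rewrite !(Q_mul_cls, Q_add_cls) fmul_catl.
Qed.

Lemma Q_mulDr : right_distributive Q_mul Q_add.
Proof.
elim/Qind=> x; elim/Qind=> y; elim/Qind=> z; rewrite !(Q_mul_cls, Q_add_cls).
exact/cls_eqc/eqc_fmul_catr.
Qed.

HB.instance Definition _ := GRing.isPzRing.Build Q
  Q_addA Q_addC Q_add0 Q_addN Q_mulA Q_mul1 Q_mulr1 Q_mulDl Q_mulDr.

Lemma cls_cat x y : cls (x ++ y) = cls x + cls y.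
Proof. by rewrite -Q_add_cls. Qed.

Lemma cls_fmul x y : cls (fmul x y) = cls x * cls y.
Proof. by rewrite -Q_mul_cls. Qed.

Lemma cls_fsub x y : cls (fsub x y) = cls x - cls y.
Proof. by rewrite cls_cat -Q_opp_cls. Qed.

Lemma cls_flatten (l : seq (Free R)) : cls (flatten l) = \sum_(z <- l) cls z.
Proof. by elim: l => [|z l IH]; rewrite ?big_nil // big_cons /= cls_cat IH. Qed.

Lemma cls0_ideal x : cls x = 0 -> in_ideal rels x.
Proof. by move/cls_eqv; rewrite /eqv /fsub /= cats0. Qed.

Lemma cls_rel r : r \in rels -> cls r = 0.
Proof. by move=> h; apply/cls_eqv; rewrite /eqv /fsub /= cats0; apply: ideal_rel. Qed.

End Quotient.

Section QuotientMaps.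
Variables (R : fieldType) (rels : seq (Free R)).
Local Notation Q := (Q rels).
Local Notation cls := (@cls R rels).
Implicit Types (x y z : Free R) (u v w : word) (g : gen).

Definition central (c : Q) := forall t, GRing.comm c t.

Lemma central1 : central (1 : Q).
Proof. by move=> t; apply/commr_sym/commr1. Qed.

Lemma centralM (c d : Q) : central c -> central d -> central (c * d).
Proof. by move=> hc hd t; rewrite /GRing.comm -mulrA hd mulrA hc mulrA. Qed.

Lemma central_swap (c X Y : Q) : central c -> X * (c * Y) = c * (X * Y).
Proof. by move=> h; rewrite mulrA -h -mulrA. Qed.

Definition sc (a : R) : Q := cls [:: (a, [::])].
Definition wd u : Q := cls (fword R u).

Lemma cls_scale a x : cls (fscale a x) = sc a * cls x.
Proof.
rewrite /sc -cls_fmul; apply: cls_eqc => w.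
rewrite coeff_scale coeff_fmul big_cons big_nil addr0 /coeff mulr_sumr.
by apply: eq_bigr => p _ /=; case: ifP; rewrite ?mulr0.
Qed.

Lemma sc_central a : central (sc a).
Proof.
elim/Qind=> x; rewrite /GRing.comm /sc -!cls_fmul; apply: cls_eqc => w.
rewrite !coeff_fmul big_cons big_nil addr0; apply: eq_bigr => p _.
by rewrite big_cons big_nil addr0 cats0 /=; case: ifP; rewrite // mulrC.
Qed.

Lemma sc_swap a (X Y : Q) : X * (sc a * Y) = sc a * (X * Y).
Proof. exact/central_swap/sc_central. Qed.

Lemma sc_add a b : sc (a + b) = sc a + sc b.
Proof.
rewrite /sc -cls_cat; apply: cls_eqc => w.
by rewrite coeff_cat !coeff_cons !coeff_nil; case: ifP; rewrite ?addr0.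
Qed.

Lemma sc_mul a b : sc (a * b) = sc a * sc b.
Proof.
rewrite /sc -cls_fmul; apply: cls_eqc => w.
by rewrite coeff_fmul /coeff !big_cons !big_nil !addr0.
Qed.

Lemma sc1 : sc 1 = 1. Proof. by []. Qed.

Lemma sc0 : sc 0 = 0.
Proof. by apply/cls_eqc => w; rewrite coeff_cons !coeff_nil; case: ifP; rewrite addr0. Qed.

Lemma scN a : sc (- a) = - sc a.
Proof. by apply/eqP; rewrite -subr_eq0 opprK -sc_add addNr sc0. Qed.

Lemma sc_sum (s : Free R) (F : R * word -> R) :
  sc (\sum_(p <- s) F p) = \sum_(p <- s) sc (F p).
Proof. by elim: s => [|p s IH]; rewrite ?big_nil ?sc0 // !big_cons sc_add IH. Qed.

Lemma wd_cat u v : wd (u ++ v) = wd u * wd v.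
Proof. by rewrite /wd -cls_fmul; apply/cls_eqc/eqc_fword_cat. Qed.

Lemma wd_nil : wd [::] = 1. Proof. by []. Qed.

Lemma wd_cons g u : wd (g :: u) = wd [:: g] * wd u.
Proof. by rewrite -wd_cat. Qed.

Lemma cls_sum x : cls x = \sum_(p <- x) sc p.1 * wd p.2.
Proof.
elim: x => [|p x IH]; first by rewrite big_nil.
by rewrite big_cons -IH -cat1s cls_cat (cls_eqc rels (eqc_term p)) cls_scale.
Qed.

Lemma cls_lin (h : word -> Free R) x :
  cls (lin h x) = \sum_(p <- x) sc p.1 * cls (h p.2).
Proof. by rewrite /lin cls_flatten big_map; apply: eq_bigr => p _; rewrite cls_scale. Qed.

Lemma lin_eqc (F : word -> Q) x y : eqc x y ->
  \sum_(p <- x) sc p.1 * F p.2 = \sum_(p <- y) sc p.1 * F p.2.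
Proof.
apply: (sum_eqc (phi := fun a u => sc a * F u)) => [u|a b u].
  by rewrite sc0 mul0r.
by rewrite sc_add mulrDl.
Qed.

Lemma central_gens (c : Q) : (forall g, GRing.comm c (wd [:: g])) -> central c.
Proof.
move=> hg; elim/Qind=> x; rewrite /GRing.comm cls_sum mulr_sumr mulr_suml.
apply: eq_bigr => p _; rewrite mulrA -(sc_central _ c) -!mulrA; congr (_ * _).
elim: p.2 => [|g u IH]; first by rewrite wd_nil mul1r mulr1.
by rewrite wd_cons mulrA hg -mulrA IH mulrA.
Qed.

Lemma relQ r : r \in rels -> \sum_(p <- r) sc p.1 * wd p.2 = 0.
Proof. by move=> h; rewrite -cls_sum; apply: cls_rel. Qed.

Lemma rel2Q a b s c d : rel2 a b s c d \in rels ->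
  wd [:: a] * wd [:: b] = sc s * (wd [:: c] * wd [:: d]).
Proof.
move/relQ/eqP; rewrite !big_cons big_nil /= addr0 sc1 mul1r scN mulNr.
by rewrite -!wd_cat subr_eq0 => /eqP.
Qed.

Definition Sg g : Q := cls (S_gen R g).
Definition Sw u : Q := cls (S_word R u).
Definition SX x : Q := \sum_(p <- x) sc p.1 * Sw p.2.

Lemma Sw_nil : Sw [::] = 1. Proof. by []. Qed.

Lemma Sw_cons g u : Sw (g :: u) = Sw u * Sg g.
Proof. by rewrite /Sw /= cls_fmul. Qed.

Lemma Sw_cat u v : Sw (u ++ v) = Sw v * Sw u.
Proof. by elim: u => [|g u IH] /=; rewrite ?Sw_nil ?mulr1 // !Sw_cons IH mulrA. Qed.

Lemma SX_flatten (l : seq (Free R)) : SX (flatten l) = \sum_(z <- l) SX z.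
Proof. by elim: l => [|z l IH]; rewrite /SX ?big_nil // big_cons /= big_cat -IH. Qed.

Lemma SX_scale a x : SX (fscale a x) = sc a * SX x.
Proof. by rewrite /SX big_map mulr_sumr; apply: eq_bigr => p _; rewrite sc_mul mulrA. Qed.

Lemma SX_fmul x y : SX (fmul x y) = SX y * SX x.
Proof.
rewrite /SX /fmul big_allpairs_dep mulr_suml exchange_big; apply: eq_bigr => p' _.
rewrite mulr_sumr; apply: eq_bigr => p _ /=.
rewrite sc_mul Sw_cat (sc_central p.1 (sc p'.1)) -!mulrA; congr (_ * _).
by rewrite mulrA (sc_central p.1 (Sw p'.2)) -mulrA.
Qed.

Lemma SX_fword u : SX (fword R u) = Sw u.
Proof. by rewrite /SX big_cons big_nil addr0 mul1r. Qed.

Lemma SX_rel2 a b s c d :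
  SX (rel2 a b s c d) = Sg b * Sg a - sc s * (Sg d * Sg c).
Proof.
by rewrite /SX !big_cons big_nil /= addr0 !Sw_cons Sw_nil !mul1r scN mulNr.
Qed.

Lemma Smap_ideal x : (forall r, r \in rels -> SX r = 0) ->
  in_ideal rels x -> in_ideal rels (Smap x).
Proof.
move=> hr /in_idealP[s hs e]; apply: cls0_ideal.
rewrite cls_lin (lin_eqc Sw e) -/(SX _) SX_flatten big_map big1_seq //.
move=> t /andP[_ ht]; move/allP: hs => /(_ t ht) hrt.
by rewrite SX_scale !SX_fmul !SX_fword hr // mul0r mulr0 mulr0.
Qed.
End QuotientMaps.

Section Convolution.
Variables (R : fieldType) (rels : seq (Free R)) (dg : gen -> Tens R).
Local Notation Q := (Q rels).
Local Notation cls := (@cls R rels).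
Local Notation sc := (@sc R rels).
Local Notation wd := (@wd R rels).
Local Notation Sw := (@Sw R rels).
Local Notation Dw := (delta_word dg).
Implicit Types (u v w : word) (g : gen) (B : word -> word -> Q).

Definition teval B (t : Tens R) : Q := \sum_(p <- t) sc p.1 * B p.2.1 p.2.2.

Lemma teval_Dw_nil B : teval B (Dw [::]) = B [::] [::].
Proof. by rewrite /teval big_cons big_nil addr0 mul1r. Qed.

Lemma teval_tmul B t1 t2 : teval B (tmul t1 t2) =
  \sum_(a <- t1) sc a.1 * teval (fun x y => B (a.2.1 ++ x) (a.2.2 ++ y)) t2.
Proof.
rewrite /teval /tmul big_allpairs_dep; apply: eq_bigr => a _; rewrite mulr_sumr.
by apply: eq_bigr => b _ /=; rewrite sc_mul mulrA.
Qed.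

Lemma teval_Dw1 B g : teval B (Dw [:: g]) = teval B (dg g).
Proof.
rewrite teval_tmul; apply: eq_bigr => a _.
by rewrite /teval big_cons big_nil /= addr0 mul1r !cats0.
Qed.

Lemma teval_Dw_cat B u v : teval B (Dw (u ++ v)) =
  \sum_(a <- Dw u) sc a.1 * teval (fun x y => B (a.2.1 ++ x) (a.2.2 ++ y)) (Dw v).
Proof.
elim: u B => [|g u IH] B; first by rewrite big_cons big_nil /= addr0 mul1r.
rewrite cat_cons /= teval_tmul /tmul big_allpairs_dep.
apply: eq_bigr => c _; rewrite IH mulr_sumr; apply: eq_bigr => a _ /=.
rewrite sc_mul -mulrA; congr (_ * (_ * _)); apply: eq_bigr => b _.
by rewrite !catA.
Qed.

Lemma teval_Dw_cat_r B u v : teval B (Dw (u ++ v)) =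
  \sum_(b <- Dw v) sc b.1 * teval (fun x y => B (x ++ b.2.1) (y ++ b.2.2)) (Dw u).
Proof.
rewrite teval_Dw_cat /teval; under eq_bigr => a _ do rewrite mulr_sumr.
rewrite exchange_big; apply: eq_bigr => b _; rewrite mulr_sumr.
by apply: eq_bigr => a _; rewrite sc_swap.
Qed.

Lemma teval_Dw_mult B u v :
  (forall a1 a2 x y, B (a1 ++ x) (a2 ++ y) = B a1 a2 * B x y) ->
  teval B (Dw (u ++ v)) = teval B (Dw u) * teval B (Dw v).
Proof.
move=> hB; rewrite teval_Dw_cat /teval mulr_suml; apply: eq_bigr => a _.
rewrite -mulrA; congr (_ * _); rewrite mulr_sumr; apply: eq_bigr => b _.
by rewrite hB sc_swap.
Qed.

Lemma teval_Dw_antimult B u v :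
  (forall a1 a2 x y, B (a1 ++ x) (a2 ++ y) = B x y * B a1 a2) ->
  teval B (Dw (u ++ v)) = teval B (Dw v) * teval B (Dw u).
Proof.
move=> hB; rewrite teval_Dw_cat /teval mulr_sumr; apply: eq_bigr => a _.
rewrite mulr_suml mulr_sumr; apply: eq_bigr => b _.
by rewrite hB -[RHS]mulrA (sc_swap a.1 (B b.2.1 b.2.2)) !mulrA -!sc_mul (mulrC a.1).
Qed.

Lemma cls_conv (f1 f2 : word -> Free R) x :
  cls (conv dg f1 f2 x) =
  \sum_(p <- x) sc p.1 * teval (fun u v => cls (f1 u) * cls (f2 v)) (Dw p.2).
Proof.
rewrite /conv cls_lin; apply: eq_bigr => p _; congr (_ * _).
by rewrite cls_flatten big_map; apply: eq_bigr => a _; rewrite cls_scale cls_fmul.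
Qed.

Lemma cls_conv3 (f1 f2 f3 : word -> Free R) x :
  cls (conv3 dg f1 f2 f3 x) = \sum_(p <- x) sc p.1 *
    teval (fun u v => teval (fun u' v' => cls (f1 u') * cls (f2 v')) (Dw u) * cls (f3 v))
          (Dw p.2).
Proof.
rewrite /conv3 cls_lin; apply: eq_bigr => p _; congr (_ * _).
rewrite cls_flatten big_map; apply: eq_bigr => a _.
rewrite cls_flatten big_map /teval mulr_suml mulr_sumr; apply: eq_bigr => b _.
by rewrite cls_scale !cls_fmul sc_mul -!mulrA.
Qed.

Definition idS u v : Q := wd u * Sw v.
Definition Sid u v : Q := Sw u * wd v.
Definition convIS u : Q := teval idS (Dw u).
Definition convSI u : Q := teval Sid (Dw u).

Lemma convIS_nil : convIS [::] = 1.
Proof. by rewrite /convIS teval_Dw_nil /idS wd_nil Sw_nil mulr1. Qed.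

Lemma convSI_nil : convSI [::] = 1.
Proof. by rewrite /convSI teval_Dw_nil /Sid wd_nil Sw_nil mulr1. Qed.

(* [(id * S)(u v) = u' (id * S)(v) S(u'')] summed over [Delta u]; hence
   [(id * S)(u v) = (id * S)(v) (id * S)(u)] when [(id * S)(v)] is central. *)
Lemma convIS_shift a1 a2 v :
  teval (fun x y => idS (a1 ++ x) (a2 ++ y)) (Dw v) = wd a1 * convIS v * Sw a2.
Proof.
rewrite /convIS /teval mulr_sumr mulr_suml; apply: eq_bigr => b _.
by rewrite /idS wd_cat Sw_cat -!mulrA [RHS]sc_swap.
Qed.

Lemma convIS_cat u v : central (convIS v) -> convIS (u ++ v) = convIS v * convIS u.
Proof.
move=> hv; rewrite {1}/convIS teval_Dw_cat.
under eq_bigr => a _ do rewrite convIS_shift -(hv (wd a.2.1)).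
rewrite /convIS /teval mulr_sumr; apply: eq_bigr => a _.
by rewrite /idS [RHS]sc_swap -!mulrA.
Qed.

Lemma convSI_shift u b1 b2 :
  teval (fun x y => Sid (x ++ b1) (y ++ b2)) (Dw u) = Sw b1 * convSI u * wd b2.
Proof.
rewrite /convSI /teval mulr_sumr mulr_suml; apply: eq_bigr => a _.
by rewrite /Sid wd_cat Sw_cat -!mulrA [RHS]sc_swap.
Qed.

Lemma convSI_cat u v : central (convSI u) -> convSI (u ++ v) = convSI u * convSI v.
Proof.
move=> hu; rewrite {1}/convSI teval_Dw_cat_r.
under eq_bigr => b _ do rewrite convSI_shift -(hu (Sw b.2.1)).
rewrite /convSI /teval mulr_sumr; apply: eq_bigr => b _.
by rewrite /Sid [RHS]sc_swap -!mulrA.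
Qed.
Lemma convIS_central : (forall g, central (convIS [:: g])) -> forall u, central (convIS u).
Proof.
move=> hg; elim=> [|g u IH]; first by rewrite convIS_nil; apply: central1.
by rewrite -cat1s convIS_cat //; apply: centralM.
Qed.

Lemma convSI_central : (forall g, central (convSI [:: g])) -> forall u, central (convSI u).
Proof.
move=> hg; elim=> [|g u IH]; first by rewrite convSI_nil; apply: central1.
by rewrite -cat1s convSI_cat //; apply: centralM.
Qed.

Lemma cls_etaeps x : cls (etaeps x) = \sum_(p <- x) sc p.1 * sc (eps_word R p.2).
Proof. by rewrite -[cls _]/(sc _) sc_sum; apply: eq_bigr => p _; rewrite sc_mul. Qed.

Lemma eps_word_cons g u : eps_word R (g :: u) = eps_gen R g * eps_word R u.
Proof. by rewrite /eps_word big_cons. Qed.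

Lemma convIS_counit : (forall g, teval idS (dg g) = sc (eps_gen R g)) ->
  forall u, convIS u = sc (eps_word R u).
Proof.
move=> hg; elim=> [|g u IH]; first by rewrite convIS_nil /eps_word big_nil.
rewrite -cat1s convIS_cat IH; last exact: sc_central.
by rewrite /convIS teval_Dw1 hg eps_word_cons sc_mul sc_central.
Qed.

Lemma convSI_counit : (forall g, teval Sid (dg g) = sc (eps_gen R g)) ->
  forall u, convSI u = sc (eps_word R u).
Proof.
move=> hg; elim=> [|g u IH]; first by rewrite convSI_nil /eps_word big_nil.
rewrite -cat1s convSI_cat; last by rewrite /convSI teval_Dw1 hg; apply: sc_central.
by rewrite IH /convSI teval_Dw1 hg eps_word_cons sc_mul.
Qed.

Lemma antipode_id_S : (forall g, teval idS (dg g) = sc (eps_gen R g)) ->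
  forall x, in_ideal rels (fsub (conv dg (@idw R) (@S_word R) x) (etaeps x)).
Proof.
move=> hg x; apply: cls0_ideal; apply/eqP; rewrite cls_fsub subr_eq0; apply/eqP.
rewrite cls_conv cls_etaeps; apply: eq_bigr => p _; congr (_ * _).
exact: convIS_counit.
Qed.

Lemma antipode_S_id : (forall g, teval Sid (dg g) = sc (eps_gen R g)) ->
  forall x, in_ideal rels (fsub (conv dg (@S_word R) (@idw R) x) (etaeps x)).
Proof.
move=> hg x; apply: cls0_ideal; apply/eqP; rewrite cls_fsub subr_eq0; apply/eqP.
rewrite cls_conv cls_etaeps; apply: eq_bigr => p _; congr (_ * _).
exact: convSI_counit.
Qed.

Lemma convISI_word : (forall g, central (convIS [:: g])) ->
  (forall g, teval (fun u v => convIS u * wd v) (dg g) = wd [:: g]) ->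
  forall w, teval (fun u v => convIS u * wd v) (Dw w) = wd w.
Proof.
move=> hc hg; elim=> [|g w IH]; first by rewrite teval_Dw_nil convIS_nil mul1r.
rewrite -cat1s teval_Dw_mult ?teval_Dw1 ?hg ?IH -?wd_cat // => a1 a2 x y.
rewrite convIS_cat ?wd_cat; last exact: convIS_central.
by rewrite -!mulrA !(central_swap _ _ (convIS_central hc x)).
Qed.

Lemma convSIS_word : (forall g, central (convSI [:: g])) ->
  (forall g, teval (fun u v => convSI u * Sw v) (dg g) = Sw [:: g]) ->
  forall w, teval (fun u v => convSI u * Sw v) (Dw w) = Sw w.
Proof.
move=> hc hg; elim=> [|g w IH]; first by rewrite teval_Dw_nil convSI_nil mul1r.
rewrite -cat1s teval_Dw_antimult ?teval_Dw1 ?hg ?IH -?Sw_cat // => a1 a2 x y.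
rewrite convSI_cat ?Sw_cat; last exact: convSI_central.
by rewrite -!mulrA !(central_swap _ _ (convSI_central hc a1)).
Qed.

Lemma vn_id_S_id : (forall g, central (convIS [:: g])) ->
  (forall g, teval (fun u v => convIS u * wd v) (dg g) = wd [:: g]) ->
  forall x, in_ideal rels (fsub (conv3 dg (@idw R) (@S_word R) (@idw R) x) x).
Proof.
move=> hc hg x; apply: cls0_ideal; apply/eqP; rewrite cls_fsub subr_eq0; apply/eqP.
rewrite cls_conv3 [RHS]cls_sum; apply: eq_bigr => p _; congr (_ * _).
exact: convISI_word.
Qed.

Lemma vn_S_id_S : (forall g, central (convSI [:: g])) ->
  (forall g, teval (fun u v => convSI u * Sw v) (dg g) = Sw [:: g]) ->
  forall x, in_ideal rels
    (fsub (conv3 dg (@S_word R) (@idw R) (@S_word R) x) (Smap x)).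
Proof.
move=> hc hg x; apply: cls0_ideal; apply/eqP; rewrite cls_fsub subr_eq0; apply/eqP.
rewrite cls_conv3 cls_lin; apply: eq_bigr => p _; congr (_ * _).
exact: convSIS_word.
Qed.

End Convolution.

Section CommonRelations.
Variables (A : pzRingType) (k kb l lb E F c q2 qm : A).

Record KL_relations : Prop := KLRelations {
  KKbK : k * kb * k = k;
  KbKKb : kb * k * kb = kb;
  KKbC : k * kb = kb * k;
  LLbL : l * lb * l = l;
  LbLLb : lb * l * lb = lb;
  LLbC : l * lb = lb * l;
  KL_unit : k * kb + l * lb = 1;
  EF_rel : E * F - F * E - c * k - c * l + c * kb + c * lb = 0;
  c_central : forall t, GRing.comm c t;
  q2_central : forall t, GRing.comm q2 t;
  qm_central : forall t, GRing.comm qm t;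
  q2qm : q2 * qm = 1
}.

Hypothesis h : KL_relations.

(* [e = k kb] and [f = l lb] are complementary orthogonal idempotents, with
   [k, kb] in the corner [e A e] and [l, lb] in the corner [f A f]. *)
Lemma LLb_def : l * lb = 1 - k * kb.
Proof. by rewrite -(KL_unit h) addrC addKr. Qed.

Lemma KKb_idem : k * kb * (k * kb) = k * kb.
Proof. by rewrite mulrA (KKbK h). Qed.

Lemma KKb_LLb : k * kb * (l * lb) = 0.
Proof. by rewrite LLb_def mulrBr mulr1 KKb_idem subrr. Qed.

Lemma LLb_KKb : l * lb * (k * kb) = 0.
Proof. by rewrite LLb_def mulrBl mul1r KKb_idem subrr. Qed.

Lemma K_corner : k = k * (k * kb) /\ k = k * kb * k.
Proof. by rewrite (KKbK h) (KKbC h) mulrA (KKbK h). Qed.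

Lemma Kb_corner : kb = kb * (k * kb) /\ kb = k * kb * kb.
Proof. by rewrite mulrA (KbKKb h) (KKbC h) (KbKKb h). Qed.

Lemma L_corner : l = l * (l * lb) /\ l = l * lb * l.
Proof. by rewrite (LLbL h) (LLbC h) mulrA (LLbL h). Qed.

Lemma Lb_corner : lb = lb * (l * lb) /\ lb = l * lb * lb.
Proof. by rewrite mulrA (LbLLb h) (LLbC h) (LbLLb h). Qed.

Lemma corner_orth (X Y : A) :
  X = X * (k * kb) /\ X = k * kb * X -> Y = Y * (l * lb) /\ Y = l * lb * Y ->
  X * Y = 0 /\ Y * X = 0.
Proof.
move=> [Xr Xl] [Yr Yl]; split.
  by rewrite Xr Yl mulrA -(mulrA X) KKb_LLb mulr0 mul0r.
by rewrite Xl Yr -mulrA (mulrA (l * lb)) LLb_KKb mul0r mulr0.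
Qed.

Lemma KL_orth :
  (k * l = 0) * (l * k = 0) * (k * lb = 0) * (lb * k = 0) *
  (kb * l = 0) * (l * kb = 0) * (kb * lb = 0) * (lb * kb = 0).
Proof.
have [? ?] := corner_orth K_corner L_corner.
have [? ?] := corner_orth K_corner Lb_corner.
have [? ?] := corner_orth Kb_corner L_corner.
have [? ?] := corner_orth Kb_corner Lb_corner.
by do !split.
Qed.

Local Notation Kp := (k + l).
Local Notation Km := (kb + lb).

Lemma Km_Kp : Km * Kp = 1.
Proof. by rewrite mulrDl !mulrDr !KL_orth addr0 add0r -(KKbC h) -(LLbC h) (KL_unit h). Qed.

Lemma Kp_Km : Kp * Km = 1.
Proof. by rewrite mulrDl !mulrDr !KL_orth addr0 add0r (KL_unit h). Qed.

Definition KL_gens := [:: k; kb; l; lb].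

Lemma Km_comm X : X \in KL_gens -> GRing.comm Km X.
Proof.
rewrite !inE /GRing.comm => /or4P[] /eqP ->; rewrite mulrDl mulrDr !KL_orth ?addr0 ?add0r //.
- by rewrite (KKbC h).
- by rewrite (LLbC h).
Qed.

Lemma Kp_comm X : X \in KL_gens -> GRing.comm Kp X.
Proof.
rewrite !inE /GRing.comm => /or4P[] /eqP ->; rewrite mulrDl mulrDr !KL_orth ?addr0 ?add0r //.
- by rewrite (KKbC h).
- by rewrite (LLbC h).
Qed.

Lemma S_comm_E (X Y s s' : A) : X \in KL_gens ->
  (forall t, GRing.comm s t) -> s * s' = 1 -> Y * E = s' * (E * X) ->
  - (E * Km) * X - s * (Y * - (E * Km)) = 0.
Proof.
move=> hX hs hss hY; rewrite mulNr !mulrN opprK -!mulrA (Km_comm hX).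
by rewrite (mulrA Y E) hY -!mulrA (mulrA s s') hss mul1r addNr.
Qed.

Lemma S_comm_F (X Y s t : A) : Y \in KL_gens ->
  (forall u, GRing.comm s u) -> s * t = 1 -> Y * F = t * (F * X) ->
  - (Kp * F) * X - s * (Y * - (Kp * F)) = 0.
Proof.
move=> hY hs hst hW.
have FX : F * X = s * (Y * F) by rewrite hW mulrA hst mul1r.
rewrite mulNr !mulrN opprK -!mulrA FX (mulrA Y Kp) -(Kp_comm hY) -mulrA.
by rewrite (mulrA Kp s) -(hs Kp) -mulrA addNr.
Qed.

Lemma S_EF (hE : Kp * E = q2 * (E * Kp)) (hF : Kp * F = qm * (F * Kp)) :
  - (Kp * F) * - (E * Km) - - (E * Km) * - (Kp * F)
  - c * kb - c * lb + c * k + c * l = 0.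
Proof.
rewrite !mulrNN.
have -> : Kp * F * (E * Km) = F * E.
  rewrite hF -!mulrA (mulrA Kp E) hE -!mulrA Kp_Km mulr1.
  by rewrite (mulrA F q2) -(q2_central h F) -mulrA mulrA (qm_central h q2) (q2qm h) mul1r.
have -> : E * Km * (Kp * F) = E * F by rewrite -mulrA (mulrA Km) Km_Kp mul1r.
rewrite -[RHS]oppr0 -(EF_rel h) !opprD !opprK.
by rewrite (ACl (2*1*5*6*3*4))%AC.
Qed.

End CommonRelations.

Lemma forall_in_seq (T : eqType) (P : T -> Prop) (s : seq T) :
  foldr (fun x acc => P x /\ acc) True s -> forall x, x \in s -> P x.
Proof.
elim: s => [|y s IH] //= [Py Ps] x; rewrite inE => /orP[/eqP -> //|]; exact: IH.
Qed.

Section CommonInQuotient.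
Variables (R : fieldType) (q : R) (rels : seq (Free R)).
Hypothesis common_sub : {subset rels_common q <= rels}.
Hypothesis hq0 : q != 0.
Local Notation sc := (@sc R rels).
Local Notation wd := (@wd R rels).
Local Notation Sg := (@Sg R rels).
Local Notation k := (wd [:: GK]).
Local Notation kb := (wd [:: GKb]).
Local Notation l := (wd [:: GL]).
Local Notation lb := (wd [:: GLb]).
Local Notation E := (wd [:: GE]).
Local Notation F := (wd [:: GF]).
Local Notation c := (sc ((q - q^-1)^-1)).
Implicit Types (u v : word) (g : gen) (a b : R).

Lemma wd3 g1 g2 g3 : wd [:: g1; g2; g3] = wd [:: g1] * wd [:: g2] * wd [:: g3].
Proof. by rewrite -!wd_cat. Qed.

Lemma binomQ u v : [:: (1, u); (-1, v)] \in rels -> wd u = wd v.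
Proof.
move/relQ/eqP; rewrite !big_cons big_nil /= addr0 mul1r scN sc1 mulN1r.
by rewrite subr_eq0 => /eqP.
Qed.

Lemma common_relations : KL_relations k kb l lb E F c (sc (q ^+ 2)) (sc (q ^- 2)).
Proof.
have in_rels r : r \in rels_common q -> r \in rels := common_sub (x := r).
split; try exact: sc_central.
- by rewrite -wd3; apply/binomQ/in_rels; rewrite !inE eqxx.
- by rewrite -wd3; apply/binomQ/in_rels; rewrite !inE eqxx ?orbT.
- by rewrite -!wd_cat; apply/binomQ/in_rels; rewrite !inE eqxx ?orbT.
- by rewrite -wd3; apply/binomQ/in_rels; rewrite !inE eqxx ?orbT.
- by rewrite -wd3; apply/binomQ/in_rels; rewrite !inE eqxx ?orbT.
- by rewrite -!wd_cat; apply/binomQ/in_rels; rewrite !inE eqxx ?orbT.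
- have /relQ : [:: (1, [:: GK; GKb]); (1, [:: GL; GLb]); (-1, [::])] \in rels.
    by apply/in_rels; rewrite !inE eqxx ?orbT.
  rewrite !big_cons big_nil /= addr0 !mul1r scN sc1 mulN1r -!wd_cat wd_nil.
  by move/eqP; rewrite addrA subr_eq0 => /eqP.
- have /relQ : last [::] (rels_common q) \in rels by apply/in_rels; rewrite !inE eqxx ?orbT.
  by rewrite !big_cons big_nil /= addr0 mul1r scN sc1 mulN1r !scN !mulNr -!wd_cat !addrA.
- by rewrite -sc_mul mulfV ?sc1 // expf_neq0.
Qed.

Definition bar g : gen :=
  match g with GK => GKb | GKb => GK | GL => GLb | GLb => GL | g => g end.

Definition KL_gen g : bool :=
  match g with GK | GKb | GL | GLb => true | _ => false end.

Lemma Sg_bar g : KL_gen g -> Sg g = wd [:: bar g].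
Proof. by case: g. Qed.

Lemma SgE : Sg GE = - (E * (kb + lb)).
Proof.
by rewrite mulrDr opprD -!wd_cat /Sg cls_sum !big_cons big_nil /= addr0 scN sc1 !mulN1r.
Qed.

Lemma SgF : Sg GF = - ((k + l) * F).
Proof.
by rewrite mulrDl opprD -!wd_cat /Sg cls_sum !big_cons big_nil /= addr0 scN sc1 !mulN1r.
Qed.

Lemma Sg_KL : (Sg GK = kb) * (Sg GKb = k) * (Sg GL = lb) * (Sg GLb = l).
Proof. by []. Qed.

Lemma Sw1 g : Sw rels [:: g] = Sg g.
Proof. by rewrite Sw_cons Sw_nil mul1r. Qed.

Lemma SX_binom u v : SX rels [:: (1, u); (-1, v)] = Sw rels u - Sw rels v.
Proof. by rewrite /SX !big_cons big_nil /= addr0 mul1r scN sc1 mulN1r. Qed.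

Lemma S_common :
  (k + l) * E = sc (q ^+ 2) * (E * (k + l)) ->
  (k + l) * F = sc (q ^- 2) * (F * (k + l)) ->
  forall r, r \in rels_common q -> SX rels r = 0.
Proof.
move=> hE hF; have h := common_relations.
apply: forall_in_seq => /=; rewrite !SX_binom !Sw_cons !Sw_nil !mul1r !Sg_KL.
do !split.
- by rewrite (KbKKb h) subrr.
- by rewrite (KKbK h) subrr.
- by rewrite (KKbC h) subrr.
- by rewrite (LbLLb h) subrr.
- by rewrite (LLbL h) subrr.
- by rewrite (LLbC h) subrr.
- rewrite /SX !big_cons big_nil /= addr0 scN sc1 mulN1r !mul1r !Sw_cons !Sw_nil !mul1r.
  by rewrite !Sg_KL addrA (KL_unit h) subrr.
- rewrite /SX !big_cons big_nil /= addr0 scN sc1 mulN1r !mul1r !scN !mulNr.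
  rewrite !Sw_cons !Sw_nil !mul1r !Sg_KL SgE SgF !addrA.
  exact: S_EF h hE hF.
Qed.

Lemma bar_KL g : KL_gen g -> wd [:: bar g] \in KL_gens k kb l lb.
Proof. by case: g => //; rewrite !inE eqxx ?orbT. Qed.

(* S kills the commutation relator [X x - s x Y] ([x = E] or [F]) as soon as
   its conjugate [bar Y x - s' x bar X] is a relator, with [s s' = 1]. *)
Lemma S_rel2 x g1 g2 a b : x \in [:: GE; GF] -> KL_gen g1 -> KL_gen g2 ->
  a * b = 1 -> rel2 (bar g2) x b x (bar g1) \in rels -> SX rels (rel2 g1 x a x g2) = 0.
Proof.
rewrite !inE => /orP[] /eqP -> h1 h2 hab /rel2Q hY; rewrite SX_rel2.
  rewrite SgE !Sg_bar //.
  apply: (S_comm_E common_relations (bar_KL h1) (sc_central a) _ hY).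
  by rewrite -sc_mul hab.
rewrite SgF !Sg_bar //.
apply: (S_comm_F common_relations (bar_KL h2) (sc_central a) _ hY).
by rewrite -sc_mul hab.
Qed.

End CommonInQuotient.

Lemma exp2qK (R : fieldType) (q : R) : q != 0 ->
  q ^+ 2 * q ^- 2 = 1 /\ q ^- 2 * q ^+ 2 = 1.
Proof. by move=> hq; rewrite mulfV ?mulVf // expf_neq0. Qed.

Section Twist.
Variables (R : fieldType) (q : R).
Hypothesis hq0 : q != 0.
Local Notation rels := (rels_twist q).
Local Notation sc := (@sc R rels).
Local Notation wd := (@wd R rels).
Local Notation k := (wd [:: GK]).
Local Notation kb := (wd [:: GKb]).
Local Notation l := (wd [:: GL]).
Local Notation lb := (wd [:: GLb]).
Local Notation E := (wd [:: GE]).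
Local Notation F := (wd [:: GF]).
Local Notation dg := (@delta_twist_gen R).

Lemma twist_common : {subset rels_common q <= rels}.
Proof. by move=> r hr; rewrite mem_cat hr. Qed.

Let h := common_relations twist_common hq0.

Lemma twist_KpE : (k + l) * E = sc (q ^+ 2) * (E * (k + l)).
Proof.
have /rel2Q hK : rel2 GK GE (q ^+ 2) GE GL \in rels by rewrite mem_cat !inE eqxx !orbT.
have /rel2Q hL : rel2 GL GE (q ^+ 2) GE GK \in rels by rewrite mem_cat !inE eqxx !orbT.
by rewrite mulrDl hK hL -!mulrDr addrC.
Qed.

Lemma twist_KpF : (k + l) * F = sc (q ^- 2) * (F * (k + l)).
Proof.
have /rel2Q hK : rel2 GK GF (q ^- 2) GF GL \in rels by rewrite mem_cat !inE eqxx !orbT.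
have /rel2Q hL : rel2 GL GF (q ^- 2) GF GK \in rels by rewrite mem_cat !inE eqxx !orbT.
by rewrite mulrDl hK hL -!mulrDr addrC.
Qed.

Lemma twist_S r : r \in rels -> SX rels r = 0.
Proof.
rewrite mem_cat => /orP[/(S_common twist_common hq0 twist_KpE twist_KpF) //|].
have [q2qm qmq2] := exp2qK hq0.
move: r; apply: forall_in_seq => /=; do !split;
  first [apply: (S_rel2 twist_common hq0 _ _ _ q2qm)
        | apply: (S_rel2 twist_common hq0 _ _ _ qmq2)];
  by rewrite // mem_cat !inE eqxx !orbT.
Qed.

Lemma twist_idS g : teval (@idS R rels) (dg g) = sc (eps_gen R g).
Proof.
case: g; rewrite /teval /idS !big_cons big_nil /= !mul1r addr0 ?wd_nil ?Sw_nil ?Sw1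
  ?Sg_KL ?SgE ?SgF ?mul1r ?mulr1 ?sc1 ?sc0 ?(KL_orth h) ?addr0 //.
- by rewrite (KL_unit h).
- by rewrite -(KKbC h) -(LLbC h) (KL_unit h).
- by rewrite -mulrDr addNr.
- by rewrite -mulrDl mulrN mulrA (Km_Kp h) mul1r addrN.
Qed.

Lemma twist_Sid g : teval (@Sid R rels) (dg g) = sc (eps_gen R g).
Proof.
case: g; rewrite /teval /Sid !big_cons big_nil /= !mul1r addr0 ?wd_nil ?Sw_nil ?Sw1
  ?Sg_KL ?SgE ?SgF ?mul1r ?mulr1 ?sc1 ?sc0 ?(KL_orth h) ?addr0 //.
- by rewrite -(KKbC h) -(LLbC h) (KL_unit h).
- by rewrite (KL_unit h).
- by rewrite -mulrDr mulNr -mulrA (Km_Kp h) mulr1 addrN.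
- by rewrite -mulrDl addNr.
Qed.

Theorem twist_hopf :
  (forall x : Free R, in_ideal rels x -> in_ideal rels (Smap x)) /\
  (forall x : Free R, in_ideal rels (fsub (conv dg (@S_word R) (@idw R) x) (etaeps x))) /\
  (forall x : Free R, in_ideal rels (fsub (conv dg (@idw R) (@S_word R) x) (etaeps x))).
Proof.
split; first by move=> x; apply: Smap_ideal twist_S.
by split; [apply: antipode_S_id twist_Sid | apply: antipode_id_S twist_idS].
Qed.

End Twist.

Lemma comm_inverse_twists (A : pzRingType) (X Y Z s s' : A) :
  (forall t, GRing.comm s t) -> (forall t, GRing.comm s' t) -> s' * s = 1 ->
  X * Z = s * (Z * X) -> Y * Z = s' * (Z * Y) -> GRing.comm (X * Y) Z.
Proof.
move=> hs hs' hss hX hY; rewrite /GRing.comm -mulrA hY (mulrA X) -(hs' X) -mulrA.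
by rewrite (mulrA X Z) hX -(mulrA s) mulrA hss mul1r mulrA.
Qed.

Section Norm.
Variables (R : fieldType) (q : R).
Hypothesis hq0 : q != 0.
Local Notation rels := (rels_norm q).
Local Notation Q := (Q rels).
Local Notation sc := (@sc R rels).
Local Notation wd := (@wd R rels).
Local Notation k := (wd [:: GK]).
Local Notation kb := (wd [:: GKb]).
Local Notation l := (wd [:: GL]).
Local Notation lb := (wd [:: GLb]).
Local Notation E := (wd [:: GE]).
Local Notation F := (wd [:: GF]).
Local Notation dg := (@delta_norm_gen R).

Lemma norm_common : {subset rels_common q <= rels}.
Proof. by move=> r hr; rewrite mem_cat hr. Qed.

Let h := common_relations norm_common hq0.

Lemma norm_KE : k * E = sc (q ^+ 2) * (E * k).
Proof. by apply: rel2Q; rewrite mem_cat !inE eqxx !orbT. Qed.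
Lemma norm_LE : l * E = sc (q ^+ 2) * (E * l).
Proof. by apply: rel2Q; rewrite mem_cat !inE eqxx !orbT. Qed.
Lemma norm_KbE : kb * E = sc (q ^- 2) * (E * kb).
Proof. by apply: rel2Q; rewrite mem_cat !inE eqxx !orbT. Qed.
Lemma norm_KF : k * F = sc (q ^- 2) * (F * k).
Proof. by apply: rel2Q; rewrite mem_cat !inE eqxx !orbT. Qed.
Lemma norm_LF : l * F = sc (q ^- 2) * (F * l).
Proof. by apply: rel2Q; rewrite mem_cat !inE eqxx !orbT. Qed.
Lemma norm_KbF : kb * F = sc (q ^+ 2) * (F * kb).
Proof. by apply: rel2Q; rewrite mem_cat !inE eqxx !orbT. Qed.

Lemma norm_KpE : (k + l) * E = sc (q ^+ 2) * (E * (k + l)).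
Proof. by rewrite mulrDl norm_KE norm_LE -!mulrDr. Qed.

Lemma norm_KpF : (k + l) * F = sc (q ^- 2) * (F * (k + l)).
Proof. by rewrite mulrDl norm_KF norm_LF -!mulrDr. Qed.

Lemma norm_S r : r \in rels -> SX rels r = 0.
Proof.
rewrite mem_cat => /orP[/(S_common norm_common hq0 norm_KpE norm_KpF) //|].
have [q2qm qmq2] := exp2qK hq0.
move: r; apply: forall_in_seq => /=; do !split;
  first [apply: (S_rel2 norm_common hq0 _ _ _ q2qm)
        | apply: (S_rel2 norm_common hq0 _ _ _ qmq2)];
  by rewrite // mem_cat !inE eqxx !orbT.
Qed.

(* In [U_{K,L,norm}] the idempotents [k kb] and [l lb = 1 - k kb] are
   central, since [k] and [kb] commute with [E] and [F] up to inverse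
   scalars. *)
Lemma norm_KKb_central : central (k * kb).
Proof.
have [q2qm qmq2] := exp2qK hq0.
have hs a : forall t, GRing.comm (sc a) t := sc_central a.
apply: central_gens => -[]; rewrite /GRing.comm.
- by rewrite -(K_corner h).1 -(K_corner h).2.
- by rewrite -(Kb_corner h).1 -(Kb_corner h).2.
- by rewrite -mulrA [RHS]mulrA !(KL_orth h) mulr0 mul0r.
- by rewrite -mulrA [RHS]mulrA !(KL_orth h) mulr0 mul0r.
- apply: (comm_inverse_twists (hs _) (hs _) _ norm_KE norm_KbE).
  by rewrite -sc_mul qmq2.
- apply: (comm_inverse_twists (hs _) (hs _) _ norm_KF norm_KbF).
  by rewrite -sc_mul q2qm.
Qed.

Definition norm_corner g : Q :=
  match g with GK | GKb => k * kb | GL | GLb => l * lb | _ => 0 end.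

Lemma norm_corner_central g : central (norm_corner g).
Proof.
have e_c := norm_KKb_central.
have f_c : central (l * lb).
  rewrite (LLb_def h) => t; apply/commr_sym/commrB; apply/commr_sym.
  - exact: central1.
  - exact: e_c.
by case: g => //= t; apply/commr_sym/commr0.
Qed.

Lemma norm_idS g : teval (@idS R rels) (dg g) = norm_corner g.
Proof.
case: g; rewrite /teval /idS !big_cons big_nil /= !mul1r addr0 ?wd_nil ?Sw_nil ?Sw1
  ?Sg_KL ?SgE ?mul1r ?mulr1 ?(KL_orth h) ?addr0 //.
- by rewrite (KKbC h).
- by rewrite (LLbC h).
- by rewrite -mulrDr addNr.
- by rewrite SgF -mulrDl mulrN mulrA (Km_Kp h) mul1r addrN.
Qed.

Lemma norm_Sid g : teval (@Sid R rels) (dg g) = norm_corner g.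
Proof.
case: g; rewrite /teval /Sid !big_cons big_nil /= !mul1r addr0 ?wd_nil ?Sw_nil ?Sw1
  ?Sg_KL ?SgF ?mul1r ?mulr1 ?(KL_orth h) ?addr0 //.
- by rewrite (KKbC h).
- by rewrite (LLbC h).
- by rewrite SgE -mulrDr mulNr -mulrA (Km_Kp h) mulr1 addrN.
- by rewrite -mulrDl addNr.
Qed.

Lemma norm_convIS1 g : convIS rels dg [:: g] = norm_corner g.
Proof. by rewrite /convIS teval_Dw1 norm_idS. Qed.

Lemma norm_convSI1 g : convSI rels dg [:: g] = norm_corner g.
Proof. by rewrite /convSI teval_Dw1 norm_Sid. Qed.

Lemma norm_ISI g : teval (fun u v => convIS rels dg u * wd v) (dg g) = wd [:: g].
Proof.
case: g; rewrite /teval !big_cons big_nil /= !mul1r addr0 ?convIS_nil ?norm_convIS1 /=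
  ?wd_nil ?mul1r ?mulr1 ?mul0r ?addr0 ?add0r.
- exact: (KKbK h).
- by rewrite -(Kb_corner h).2.
- by rewrite -!mulrA !(KL_orth h) !mulr0 !addr0 mulrA (LLbL h).
- by rewrite -!mulrA !(KL_orth h) !mulr0 !addr0 mulrA -(Lb_corner h).2.
- by [].
- by rewrite -mulrDl (KL_unit h) mul1r.
Qed.

Lemma norm_SIS g :
  teval (fun u v => convSI rels dg u * Sw rels v) (dg g) = Sw rels [:: g].
Proof.
case: g; rewrite /teval !big_cons big_nil /= !mul1r addr0 ?convSI_nil ?norm_convSI1 /=
  ?Sw_nil ?Sw1 ?Sg_KL ?mul1r ?mulr1 ?mul0r ?addr0 ?add0r.
- by rewrite -(Kb_corner h).2.
- exact: (KKbK h).
- by rewrite -!mulrA !(KL_orth h) !mulr0 !addr0 mulrA -(Lb_corner h).2.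
- by rewrite -!mulrA !(KL_orth h) !mulr0 !addr0 mulrA (LLbL h).
- by [].
- by rewrite -mulrDl (KL_unit h) mul1r.
Qed.

Theorem norm_von_neumann :
  (forall x : Free R, in_ideal rels x -> in_ideal rels (Smap x)) /\
  (forall x : Free R, in_ideal rels
     (fsub (conv3 dg (@idw R) (@S_word R) (@idw R) x) x)) /\
  (forall x : Free R, in_ideal rels
     (fsub (conv3 dg (@S_word R) (@idw R) (@S_word R) x) (Smap x))).
Proof.
have hIS g : central (convIS rels dg [:: g]) by rewrite norm_convIS1; apply: norm_corner_central.
have hSI g : central (convSI rels dg [:: g]) by rewrite norm_convSI1; apply: norm_corner_central.
split; first by move=> x; apply: Smap_ideal norm_S.
by split; [apply: vn_id_S_id hIS norm_ISI | apply: vn_S_id_S hSI norm_SIS].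
Qed.

End Norm.

Theorem mainTheorem11 (R : fieldType) (q : R)
    (hq0 : q != 0) (hq1 : q != 1) (hqm1 : q != -1) :
  (* (1) U_{K,L,twist}: S is a well-defined antihomomorphism and an antipode *)
  ((forall x : Free R, in_ideal (rels_twist q) x ->
                       in_ideal (rels_twist q) (Smap x)) /\
   (forall x : Free R, in_ideal (rels_twist q)
      (fsub (conv (@delta_twist_gen R) (@S_word R) (@idw R) x) (etaeps x))) /\
   (forall x : Free R, in_ideal (rels_twist q)
      (fsub (conv (@delta_twist_gen R) (@idw R) (@S_word R) x) (etaeps x))))
  /\
  (* (2) U_{K,L,norm}: T is a well-defined antihomomorphism, id*T*id = id,
     T*id*T = T *)
  ((forall x : Free R, in_ideal (rels_norm q) x ->
                       in_ideal (rels_norm q) (Smap x)) /\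
   (forall x : Free R, in_ideal (rels_norm q)
      (fsub (conv3 (@delta_norm_gen R) (@idw R) (@S_word R) (@idw R) x) x)) /\
   (forall x : Free R, in_ideal (rels_norm q)
      (fsub (conv3 (@delta_norm_gen R) (@S_word R) (@idw R) (@S_word R) x)
            (Smap x)))).
Proof. exact: conj (twist_hopf hq0) (norm_von_neumann hq0). Qed.
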